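(* For every $n\ge1$ and $s\ge 2$, the homomorphism $\nu_n^s:A_n^s\to A_{n+1}^s$ is injective.
   Context: For $s\ge1$, $A_n^s$ is the group of path components of the space of homotopy self-equivalences of a connected graph $G\simeq\bigvee^nS^1$ fixing $s$ chosen distinct marked points $x_1,\dots,x_s$ pointwise; $A_n^s\cong\mathrm{Aut}(F_n)\ltimes F_n^{\times(s-1)}$ with $\mathrm{Aut}(F_n)$ acting diagonally. The homomorphism $\alpha_n^s:A_n^s\to A_{n+1}^{s-1}$ (for $s\ge2$) is induced by connecting the last marked point $x_s$ to the first marked point $x_1$ by a new edge (which raises the rank to $n+1 $ and leaves $s-1$ marked points), extending self-equivalences by the identity on the new edge. The homomorphism $\mu_{n}^{s}:A_{n}^{s}\to A_{n}^{s+1}$ is induced by attaching a new edge (leg) at a marked point, with its free endpoint as a new marked point, extending by the identity on the leg; under $A_n^s\cong\mathrm{Aut}(F_n)\ltimes F_n^{\times(s-1)}$ it is the standard inclusion $\mathrm{Aut}(F_n)\ltimes F_n^{\times(s-1)}\hookrightarrow\mathrm{Aut}(F_n)\ltimes F_n^{\times s}$. Finally $\nu_n^s:=\mu_{n+1}^{s-1}\circ\alpha_n^s$. *)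

From HB Require Import structures.
From mathcomp Require Import all_boot.
Set Implicit Arguments. Unset Strict Implicit. Unset Printing Implicit Defensive.

(* A letter of F_n: a generator index and an "inverse" flag. *)
Definition letter (n : nat) := ('I_n * bool)%type.

Definition cancels n (x y : letter n) : bool := (x.1 == y.1) && (x.2 != y.2).
Definition ncancels n : rel (letter n) := fun x y => ~~ cancels x y.

Definition reducedw n (w : seq (letter n)) : bool := sorted (@ncancels n) w.

Definition rstep n (x : letter n) (acc : seq (letter n)) : seq (letter n) :=
  if acc is y :: r then (if cancels x y then r else x :: acc) else [:: x].
Definition reduce n (w : seq (letter n)) : seq (letter n) := foldr (@rstep n) [::] w.

Lemma reduce_reduced n (w : seq (letter n)) : reducedw (reduce w).
Proof.
rewrite /reducedw; elim: w => [//|x w IH] /=.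
rewrite /rstep; case: (reduce w) IH => [//|y r] /= H.
case: ifP => Hc; first by case: r H => //= z r /andP [].
by rewrite /= {1}/ncancels Hc.
Qed.

Record FreeGroup (n : nat) := FG { fgval : seq (letter n); fgP : reducedw fgval }.
HB.instance Definition _ n := [isSub for @fgval n].
HB.instance Definition _ n := [Equality of FreeGroup n by <:].

Definition fg_mul n (u v : FreeGroup n) : FreeGroup n :=
  FG (reduce_reduced (fgval u ++ fgval v)).
Definition fg_one n : FreeGroup n := FG (reduce_reduced [::]).
Definition fg_inv n (u : FreeGroup n) : FreeGroup n :=
  FG (reduce_reduced (rev (map (fun x : letter n => (x.1, ~~ x.2)) (fgval u)))).
Definition fg_gen n (i : 'I_n) : FreeGroup n := FG (reduce_reduced [:: (i, false)]).

Definition is_hom n m (f : FreeGroup n -> FreeGroup m) : Prop :=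
  forall u v, f (fg_mul u v) = fg_mul (f u) (f v).
Definition is_aut n (f : FreeGroup n -> FreeGroup n) : Prop :=
  is_hom f /\ bijective f.

Definition hom_ext n m (img : 'I_n -> FreeGroup m) (w : FreeGroup n) : FreeGroup m :=
  foldr (fun (l : letter n) acc =>
           fg_mul (if l.2 then fg_inv (img l.1) else img l.1) acc)
        (fg_one m) (fgval w).

Definition fg_incl n : FreeGroup n -> FreeGroup n.+1 :=
  hom_ext (fun i : 'I_n => fg_gen (lift ord_max i)).

(* Elements of A_n^s = Aut(F_n) |x F_n^(s-1) are pairs (phi, g) with phi an
   automorphism of F_n and g = [:: g_2; ...; g_s] a list of size s-1.
   Group law: (phi, g) (psi, h) = (phi \o psi, [seq g_i * phi h_i]). *)
Definition A_carrier n s (phi : FreeGroup n -> FreeGroup n) (g : seq (FreeGroup n)) : Prop :=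
  is_aut phi /\ size g = s.-1.

Definition A_mul n (a b : (FreeGroup n -> FreeGroup n) * seq (FreeGroup n)) :=
  (a.1 \o b.1, [seq fg_mul gh.1 (a.1 gh.2) | gh <- zip a.2 b.2]).

(* alpha_n^s : A_n^s -> A_(n+1)^(s-1): the new generator t = x_n (index n),
   the loop formed by the fixed path x_1 ~> x_s followed by the new edge;
   phi' restricts to phi on F_n and sends t to g_s^{-1} t; the coordinates
   g_2..g_(s-1) are kept. *)
Definition alpha_aut n (phi : FreeGroup n -> FreeGroup n) (gs : FreeGroup n)
  : FreeGroup n.+1 -> FreeGroup n.+1 :=
  hom_ext (fun j : 'I_n.+1 =>
    match unlift ord_max j with
    | Some i => fg_incl (phi (fg_gen i))
    | None => fg_mul (fg_inv (fg_incl gs)) (fg_gen ord_max)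
    end).

Definition alpha n s (a : (FreeGroup n -> FreeGroup n) * seq (FreeGroup n))
  : (FreeGroup n.+1 -> FreeGroup n.+1) * seq (FreeGroup n.+1) :=
  (alpha_aut a.1 (last (fg_one n) a.2), map (@fg_incl n) (take (s.-2) a.2)).

Definition mu n (a : (FreeGroup n -> FreeGroup n) * seq (FreeGroup n)) :=
  (a.1, rcons a.2 (fg_one n)).

Definition nu n s (a : (FreeGroup n -> FreeGroup n) * seq (FreeGroup n)) :=
  mu (alpha s a).

(* Since mu only appends a trivial coordinate, nu (phi, g) = nu (psi, h)
   forces alpha (phi, g) = alpha (psi, h).  Write g = g' ++ [:: g_s]; then
   alpha (phi, g) is the pair (phi', incl g') where incl : F_n -> F_(n+1) is
   the standard inclusion and phi' is the endomorphism of F_(n+1) sending an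
   old generator x_i to incl (phi x_i) and the new generator t to
   incl(g_s)^-1 t.  Evaluating phi' at t and cancelling t recovers g_s;
   evaluating it at the old generators recovers phi on the generators, hence
   phi itself, because a homomorphism of free groups is determined by its
   values on generators; injectivity of incl recovers g'. *)
From Stdlib Require Import FunctionalExtensionality.
From mathcomp Require Import all_boot.
Set Implicit Arguments. Unset Strict Implicit. Unset Printing Implicit Defensive.

Definition reduce_onto n (u R : seq (letter n)) : seq (letter n) :=
  foldr (@rstep n) R u.

Lemma reduce_cat n (u v : seq (letter n)) :
  reduce (u ++ v) = reduce_onto u (reduce v).
Proof. by rewrite /reduce /reduce_onto foldr_cat. Qed.

Lemma rstep_reduced n (x : letter n) (R : seq (letter n)) :
  reducedw R -> reducedw (rstep x R).
Proof.
rewrite /reducedw /rstep; case: R => [//|y r] /= HR.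
case: ifP => Hxy; first by case: r HR => //= z r /andP [].
by rewrite /= {1}/ncancels Hxy.
Qed.

Lemma reduce_onto_reduced n (u R : seq (letter n)) :
  reducedw R -> reducedw (reduce_onto u R).
Proof. by move=> HR; elim: u => [//|x u IH] /=; apply: rstep_reduced. Qed.

Lemma reducedw_behead n (x : letter n) (w : seq (letter n)) :
  reducedw (x :: w) -> reducedw w.
Proof. exact: path_sorted. Qed.

Lemma reduce_id n (w : seq (letter n)) : reducedw w -> reduce w = w.
Proof.
elim: w => [//|x w IH] Hw /=; rewrite IH; last exact: reducedw_behead Hw.
case: w Hw {IH} => [//|y w] /= /andP [Hxy _].
by rewrite /rstep (negbTE Hxy).
Qed.

Lemma rstep_cancel n (x y : letter n) (R : seq (letter n)) :
  cancels x y -> reducedw R -> rstep x (rstep y R) = R.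
Proof.
move=> Cxy; case: R => [_|z R]; first by rewrite /= /rstep Cxy.
rewrite {2}/rstep; case: ifP => Cyz HR; last by rewrite /rstep Cxy.
have -> : x = z.
  move: Cxy Cyz {HR}; case: x => a b; case: y => c d; case: z => e f.
  rewrite /cancels /= => /andP [/eqP -> H1] /andP [/eqP -> H2].
  by move: H1 H2; case: b; case: d; case: f.
case: R HR => [//|w R] /= /andP [Hzw _].
by rewrite /rstep (negbTE Hzw).
Qed.

Lemma rstep_reduce_onto n (x : letter n) (u R : seq (letter n)) :
  reducedw R -> rstep x (reduce_onto u R) = reduce_onto (rstep x u) R.
Proof.
move=> HR; case: u => [//|y u] /=; rewrite {2}/rstep.
case: ifP => // Cxy; rewrite rstep_cancel //; exact: reduce_onto_reduced.
Qed.

Lemma reduce_onto_reduce n (u R : seq (letter n)) :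
  reducedw R -> reduce_onto (reduce u) R = reduce_onto u R.
Proof.
by move=> HR; elim: u => [//|x u IH] /=; rewrite -IH -rstep_reduce_onto.
Qed.

Lemma reduce_catl n (u v : seq (letter n)) :
  reduce (reduce u ++ v) = reduce (u ++ v).
Proof. by rewrite !reduce_cat reduce_onto_reduce //; apply: reduce_reduced. Qed.

Lemma reduce_catr n (u v : seq (letter n)) :
  reduce (u ++ reduce v) = reduce (u ++ v).
Proof. by rewrite !reduce_cat reduce_id //; apply: reduce_reduced. Qed.

Lemma reduce_inv_cat n (u : seq (letter n)) :
  reduce (rev (map (fun x : letter n => (x.1, ~~ x.2)) u) ++ u) = [::].
Proof.
elim: u => [//|x u IH] /=.
rewrite rev_cons -cats1 -catA reduce_cat /= rstep_cancel.
- by rewrite -reduce_cat.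
- by rewrite /cancels /= eqxx; case: (x.2).
- exact: reduce_reduced.
Qed.

Section FreeGroupLaws.
Variable n : nat.
Implicit Types u v w : FreeGroup n.
Local Notation "u * v" := (@fg_mul n u v).

Lemma fg_mulA u v w : (u * v) * w = u * (v * w).
Proof. by apply: val_inj; rewrite /= reduce_catl reduce_catr catA. Qed.

Lemma fg_mul1g u : fg_one n * u = u.
Proof. by apply: val_inj; rewrite /= reduce_id //; apply: fgP. Qed.

Lemma fg_mulg1 u : u * fg_one n = u.
Proof. by apply: val_inj; rewrite /= cats0 reduce_id //; apply: fgP. Qed.

Lemma fg_mulVg u : fg_inv u * u = fg_one n.
Proof. by apply: val_inj; rewrite /= reduce_catl reduce_inv_cat. Qed.

Lemma fg_mulKg u v : fg_inv u * (u * v) = v.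
Proof. by rewrite -fg_mulA fg_mulVg fg_mul1g. Qed.

Lemma fg_mulgV u : u * fg_inv u = fg_one n.
Proof.
by rewrite -{1}[u](fg_mulKg (fg_inv u)) fg_mulA fg_mulVg fg_mul1g fg_mulVg.
Qed.

Lemma fg_mulgK u v : (u * v) * fg_inv v = u.
Proof. by rewrite fg_mulA fg_mulgV fg_mulg1. Qed.

Lemma fg_mulIr u v w : v * u = w * u -> v = w.
Proof. by move=> E; rewrite -(fg_mulgK v u) E fg_mulgK. Qed.

Lemma fg_inv_inj : injective (@fg_inv n).
Proof. by move=> u v E; apply: (@fg_mulIr (fg_inv u)); rewrite fg_mulgV E fg_mulgV. Qed.

End FreeGroupLaws.

Definition fg_letter n (x : letter n) : FreeGroup n :=
  if x.2 then fg_inv (fg_gen x.1) else fg_gen x.1.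

Lemma fg_letterE n (x : letter n) : fgval (fg_letter x) = [:: x].
Proof. by case: x => i []. Qed.

Lemma fg_mul_letter_val n (x : letter n) (u : FreeGroup n) :
  reducedw (x :: fgval u) -> fgval (fg_mul (fg_letter x) u) = x :: fgval u.
Proof. by move=> Hxu; rewrite /= fg_letterE reduce_id. Qed.

Lemma FG_cons n (x : letter n) (w : seq (letter n))
    (Hxw : reducedw (x :: w)) (Hw : reducedw w) :
  FG Hxw = fg_mul (fg_letter x) (FG Hw).
Proof. by apply/esym/val_inj; apply: fg_mul_letter_val. Qed.

Lemma hom_one m k (f : FreeGroup m -> FreeGroup k) :
  is_hom f -> f (fg_one m) = fg_one k.
Proof.
move=> Hf; apply: (@fg_mulIr _ (f (fg_one m))).
by rewrite -Hf !fg_mul1g.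
Qed.

Lemma hom_inv m k (f : FreeGroup m -> FreeGroup k) (u : FreeGroup m) :
  is_hom f -> f (fg_inv u) = fg_inv (f u).
Proof.
move=> Hf; apply: (@fg_mulIr _ (f u)).
by rewrite -Hf !fg_mulVg hom_one.
Qed.

Lemma hom_eq_on_gens m k (f f' : FreeGroup m -> FreeGroup k) :
  is_hom f -> is_hom f' -> (forall i, f (fg_gen i) = f' (fg_gen i)) -> f = f'.
Proof.
move=> Hf Hf' Egen; apply: functional_extensionality.
have Eletter x : f (fg_letter x) = f' (fg_letter x).
  by case: x => i []; rewrite /fg_letter /= ?hom_inv ?Egen.
case=> w; elim: w => [|x w IH] Hw.
  have -> : FG Hw = fg_one m by apply: val_inj.
  by rewrite !hom_one.
have Hw' := reducedw_behead Hw.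
by rewrite (FG_cons Hw Hw') Hf Hf' Eletter IH.
Qed.

Lemma hom_ext_gen m k (img : 'I_m -> FreeGroup k) (i : 'I_m) :
  hom_ext img (fg_gen i) = img i.
Proof. by rewrite /hom_ext /= fg_mulg1. Qed.

Definition incl_letter n (x : letter n) : letter n.+1 := (lift ord_max x.1, x.2).

Lemma cancels_incl n (x y : letter n) :
  cancels (incl_letter x) (incl_letter y) = cancels x y.
Proof. by rewrite /cancels /= (inj_eq (@lift_inj _ ord_max)). Qed.

Lemma reducedw_incl n (w : seq (letter n)) :
  reducedw w -> reducedw (map (@incl_letter n) w).
Proof.
rewrite /reducedw sorted_map; apply: sub_sorted => x y.
by rewrite /= /ncancels cancels_incl.
Qed.

Lemma fg_incl_val n (u : FreeGroup n) :
  fgval (fg_incl u) = map (@incl_letter n) (fgval u).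
Proof.
case: u => w; elim: w => [//|x w IH] Hxw.
have Hw := reducedw_behead Hxw.
have -> : fg_incl (FG Hxw) = fg_mul (fg_letter (incl_letter x)) (fg_incl (FG Hw))
  by [].
by rewrite fg_mul_letter_val IH // -map_cons reducedw_incl.
Qed.

Lemma incl_letter_inj n : injective (@incl_letter n).
Proof.
move=> [i b] [j c] E; congr (_, _); last exact: (congr1 snd E).
exact: (@lift_inj _ ord_max _ _ (congr1 fst E)).
Qed.

Lemma fg_incl_inj n : injective (@fg_incl n).
Proof.
move=> u v /(congr1 (@fgval _)); rewrite !fg_incl_val => E.
by apply: val_inj; apply: inj_map E; apply: incl_letter_inj.
Qed.

Lemma alpha_aut_new n (phi : FreeGroup n -> FreeGroup n) (gs : FreeGroup n) :
  alpha_aut phi gs (fg_gen ord_max) = fg_mul (fg_inv (fg_incl gs)) (fg_gen ord_max).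
Proof. by rewrite /alpha_aut hom_ext_gen unlift_none. Qed.

Lemma alpha_aut_old n (phi : FreeGroup n -> FreeGroup n) (gs : FreeGroup n) (i : 'I_n) :
  alpha_aut phi gs (fg_gen (lift ord_max i)) = fg_incl (phi (fg_gen i)).
Proof. by rewrite /alpha_aut hom_ext_gen liftK. Qed.

Lemma alpha_aut_inj n (phi psi : FreeGroup n -> FreeGroup n) (gs hs : FreeGroup n) :
  is_hom phi -> is_hom psi -> alpha_aut phi gs = alpha_aut psi hs ->
  phi = psi /\ gs = hs.
Proof.
move=> Hphi Hpsi E; split.
- apply: hom_eq_on_gens => // i; apply: fg_incl_inj.
  by rewrite -(alpha_aut_old phi gs) -(alpha_aut_old psi hs) E.
- apply/fg_incl_inj/fg_inv_inj/(@fg_mulIr _ (fg_gen ord_max)).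
  by rewrite -(alpha_aut_new phi) -(alpha_aut_new psi) E.
Qed.

Lemma rcons_take_last T (x0 : T) (l : seq T) (k : nat) :
  size l = k.+1 -> l = rcons (take k l) (last x0 l).
Proof.
case/lastP: l => [//|l x]; rewrite size_rcons last_rcons => -[<-].
by rewrite -!cats1 take_size_cat.
Qed.

Theorem mainTheorem8 (n s : nat) : 1 <= n -> 2 <= s ->
  forall (phi psi : FreeGroup n -> FreeGroup n) (g h : seq (FreeGroup n)),
    A_carrier s phi g -> A_carrier s psi h ->
    nu s (phi, g) = nu s (psi, h) -> (phi, g) = (psi, h).
Proof.
move=> _ s_ge2 phi psi g h [[Hphi _] size_g] [[Hpsi _] size_h].
rewrite /nu /mu /alpha /= => -[E_aut /rcons_inj [E_init]].
have [<- E_last] := alpha_aut_inj Hphi Hpsi E_aut.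
have size_pred : s.-1 = (s.-2).+1 by move: s_ge2; case: (s) => [|[|]].
rewrite size_pred in size_g size_h.
have E_take : take s.-2 g = take s.-2 h by apply: inj_map E_init; apply: fg_incl_inj.
by rewrite (rcons_take_last (fg_one n) size_g) (rcons_take_last (fg_one n) size_h)
  E_take E_last.
Qed.
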